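(* Let $X$ be a nonempty set, $F:X\rightrightarrows Y$ with $F(x)\in\mathcal P^0_{\mp C}(Y)$ for all $x$, $\mp C$-closed and $\mp C$-bounded valued, let $e\in-\mathrm{int}(C)$, and assume that for all $x,y\in X$, $F(x)\preceq^sF(y)$ or $F(y)\preceq^sF(x)$. If $x_0\in X$ is an $s$-maximal (resp. $s$-minimal) solution of $(s\text{-}SOP)$, then $x_0$ is a strongly maximal (resp. strongly minimal) solution of the vector problem of maximizing (resp. minimizing) $v_e(F(x))$ over $x\in X$.
   Context: $Y$ is a real topological linear space and $C\subset Y$ is a convex, closed, pointed cone with nonempty interior. $\mathbb R^2$ is ordered by $\mathbb R^2_+$. $\mathcal P^0_{\mp C}(Y)$ is the family of nonempty $A\subset Y$ with $A+C\neq Y$ and $A-C\neq Y$. $C$-closed: $A+C$ closed; $C$-bounded: for every neighborhood $U$ of $0$ there is $t>0$ with $A\subset tU+C$; $\mp C$-closed/bounded: holds for $C$ and $-C$. $A\preceq^s B$ iff $B\subset A+C$ and $A\subset B-C$. $x_0$ is an $s$-maximal (minimal) solution of $(s\text{-}SOP)$ if for every $x\in X$, $F(x_0)\preceq^sF(x)$ implies $F(x)\preceq^sF(x_0)$ (resp. $F(x)\preceq^sF(x_0)$ implies $F(x_0)\preceq^sF(x)$). For $e\in-\mathrm{int}(C)$: $\phi_{e,A}(y)=\inf\{t\in\mathbb R: y\in te+A+C\}$; $G^\ell_e(A,B)=\sup_{b\in B}\phi_{e,A}(b)$; $G^u_e(B,A):=-G^\ell_e(-B,-A)$; $v_e(A)=\big(-G^\ell_e(\{0\},A),\,G^u_e(A,\{0\})\big)$.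 For $f:X\to\mathbb R^2$, $\bar x$ is a strongly maximal solution of $\max f$ if $f(x)\le_{\mathbb R^2_+}f(\bar x)$ for all $x\in X$, and a strongly minimal solution of $\min f$ if $f(\bar x)\le_{\mathbb R^2_+}f(x)$ for all $x\in X$. *)

From Stdlib Require Import Reals Lra Classical ClassicalEpsilon.
Open Scope R_scope.
Set Implicit Arguments.

Record TLS (Y : Type) := {
  vadd : Y -> Y -> Y;
  vopp : Y -> Y;
  vzero : Y;
  vscal : R -> Y -> Y;
  vadd_assoc : forall x y z, vadd x (vadd y z) = vadd (vadd x y) z;
  vadd_comm : forall x y, vadd x y = vadd y x;
  vadd_0 : forall x, vadd x vzero = x;
  vadd_opp : forall x, vadd x (vopp x) = vzero;
  vscal_1 : forall x, vscal 1 x = x;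
  vscal_assoc : forall a b x, vscal a (vscal b x) = vscal (a * b) x;
  vscal_distr_v : forall a x y, vscal a (vadd x y) = vadd (vscal a x) (vscal a y);
  vscal_distr_s : forall a b x, vscal (a + b) x = vadd (vscal a x) (vscal b x);
  is_open : (Y -> Prop) -> Prop;
  open_full : is_open (fun _ => True);
  open_inter : forall U V, is_open U -> is_open V -> is_open (fun y => U y /\ V y);
  open_union : forall P : (Y -> Prop) -> Prop,
      (forall U, P U -> is_open U) -> is_open (fun y => exists U, P U /\ U y);
  (* continuity of addition (product topology) *)
  vadd_cont : forall U x y, is_open U -> U (vadd x y) ->
      exists V W, is_open V /\ is_open W /\ V x /\ W y /\
        forall v w, V v -> W w -> U (vadd v w);
  (* continuity of scalar multiplication R x Y -> Y *)
  vscal_cont : forall U t x, is_open U -> U (vscal t x) ->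
      exists d W, 0 < d /\ is_open W /\ W x /\
        forall s w, Rabs (s - t) < d -> W w -> U (vscal s w)
}.

Section Sets.
Variable Y : Type.
Variable T : TLS Y.

Definition is_closed (A : Y -> Prop) : Prop := is_open T (fun y => ~ A y).
Definition tinterior (A : Y -> Prop) (y : Y) : Prop :=
  exists U, is_open T U /\ U y /\ forall z, U z -> A z.
Definition neighborhood0 (U : Y -> Prop) : Prop :=
  exists V, is_open T V /\ V (vzero T) /\ forall z, V z -> U z.

Definition msum (A B : Y -> Prop) (y : Y) : Prop :=
  exists a b, A a /\ B b /\ y = vadd T a b.
Definition mdiff (A B : Y -> Prop) (y : Y) : Prop :=
  exists a b, A a /\ B b /\ y = vadd T a (vopp T b).
Definition sopp (A : Y -> Prop) (y : Y) : Prop := exists a, A a /\ y = vopp T a.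
Definition sscal (t : R) (A : Y -> Prop) (y : Y) : Prop :=
  exists a, A a /\ y = vscal T t a.
Definition single (y0 : Y) (y : Y) : Prop := y = y0.
Definition incl (A B : Y -> Prop) : Prop := forall y, A y -> B y.
Definition is_whole (A : Y -> Prop) : Prop := forall y, A y.

Definition is_cone (C : Y -> Prop) : Prop :=
  forall t c, 0 <= t -> C c -> C (vscal T t c).
Definition is_convex (C : Y -> Prop) : Prop :=
  forall t x y, 0 <= t <= 1 -> C x -> C y ->
    C (vadd T (vscal T t x) (vscal T (1 - t) y)).
Definition is_pointed (C : Y -> Prop) : Prop :=
  forall c, C c -> C (vopp T c) -> c = vzero T.
Definition good_cone (C : Y -> Prop) : Prop :=
  is_cone C /\ is_convex C /\ is_closed C /\ is_pointed C /\
  (exists y, tinterior C y).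

Definition P0mpC (C A : Y -> Prop) : Prop :=
  (exists a, A a) /\ ~ is_whole (msum A C) /\ ~ is_whole (mdiff A C).

Definition C_closed (C A : Y -> Prop) : Prop := is_closed (msum A C).
Definition C_bounded (C A : Y -> Prop) : Prop :=
  forall U, neighborhood0 U -> exists t, 0 < t /\ incl A (msum (sscal t U) C).
Definition mpC_closed (C A : Y -> Prop) : Prop :=
  C_closed C A /\ C_closed (sopp C) A.
Definition mpC_bounded (C A : Y -> Prop) : Prop :=
  C_bounded C A /\ C_bounded (sopp C) A.

Definition s_le (C A B : Y -> Prop) : Prop :=
  incl B (msum A C) /\ incl A (mdiff B C).
End Sets.

Inductive Rbar := Fin (r : R) | PInf | MInf.

Definition Rbar_le (x y : Rbar) : Prop :=
  match x, y with
  | MInf, _ => True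
  | _, PInf => True
  | Fin a, Fin b => a <= b
  | _, _ => False
  end.
Definition Rbar_opp (x : Rbar) : Rbar :=
  match x with Fin a => Fin (- a) | PInf => MInf | MInf => PInf end.

Definition is_sup_Rbar (S : Rbar -> Prop) (m : Rbar) : Prop :=
  (forall x, S x -> Rbar_le x m) /\
  (forall u, (forall x, S x -> Rbar_le x u) -> Rbar_le m u).
Definition is_inf_Rbar (S : Rbar -> Prop) (m : Rbar) : Prop :=
  (forall x, S x -> Rbar_le m x) /\
  (forall u, (forall x, S x -> Rbar_le u x) -> Rbar_le u m).
(** supremum / infimum in the extended reals (they always exist; sup of the
    empty set is -oo, inf of the empty set is +oo) *)
Definition Rbar_sup (S : Rbar -> Prop) : Rbar :=
  epsilon (inhabits PInf) (is_sup_Rbar S).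
Definition Rbar_inf (S : Rbar -> Prop) : Rbar :=
  epsilon (inhabits PInf) (is_inf_Rbar S).

Section Scalarization.
Variable Y : Type.
Variable T : TLS Y.

Definition phi (C : Y -> Prop) (e : Y) (A : Y -> Prop) (y : Y) : Rbar :=
  Rbar_inf (fun z => exists t, z = Fin t /\
     msum T (msum T (single (vscal T t e)) A) C y).

Definition Gl (C : Y -> Prop) (e : Y) (A B : Y -> Prop) : Rbar :=
  Rbar_sup (fun z => exists b, B b /\ z = phi C e A b).

Definition Gu (C : Y -> Prop) (e : Y) (B A : Y -> Prop) : Rbar :=
  Rbar_opp (Gl C e (sopp T B) (sopp T A)).

Definition v_e (C : Y -> Prop) (e : Y) (A : Y -> Prop) : Rbar * Rbar :=
  (Rbar_opp (Gl C e (single (vzero T)) A), Gu C e A (single (vzero T))).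
End Scalarization.

Definition le2 (p q : Rbar * Rbar) : Prop :=
  Rbar_le (fst p) (fst q) /\ Rbar_le (snd p) (snd q).

Definition strongly_max (X : Type) (f : X -> Rbar * Rbar) (xb : X) : Prop :=
  forall x, le2 (f x) (f xb).
Definition strongly_min (X : Type) (f : X -> Rbar * Rbar) (xb : X) : Prop :=
  forall x, le2 (f xb) (f x).

Definition s_maximal (Y X : Type) (T : TLS Y) (C : Y -> Prop)
    (F : X -> Y -> Prop) (x0 : X) : Prop :=
  forall x, s_le T C (F x0) (F x) -> s_le T C (F x) (F x0).
Definition s_minimal (Y X : Type) (T : TLS Y) (C : Y -> Prop)
    (F : X -> Y -> Prop) (x0 : X) : Prop :=
  forall x, s_le T C (F x) (F x0) -> s_le T C (F x0) (F x).

From Stdlib Require Import Reals Lra Classical ClassicalEpsilon.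
Open Scope R_scope.
Set Implicit Arguments.

(* Proof idea: the map A |-> v_e(A) is monotone from the set less order to
   the componentwise order of R^2.  Indeed B ⊆ A + C makes every
   phi_{e,{0}}(b) at most some phi_{e,{0}}(a), while A ⊆ B - C gives
   -A ⊆ -B + C and hence phi_{e,-B} <= phi_{e,-A}; only the closedness of C
   under addition is used.  Since F(x0) and F(x) are always comparable, an
   s-maximal x0 satisfies F(x) <=^s F(x0) for every x (dually for s-minimal),
   and monotonicity yields the strong optimality of x0. *)

Lemma Rbar_le_trans x y z : Rbar_le x y -> Rbar_le y z -> Rbar_le x z.
Proof. destruct x, y, z; simpl; intros; try lra; tauto. Qed.

Lemma Rbar_opp_le x y : Rbar_le x y -> Rbar_le (Rbar_opp y) (Rbar_opp x).
Proof. destruct x, y; simpl; intros; try lra; tauto. Qed.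

Lemma Rbar_opp_involutive x : Rbar_opp (Rbar_opp x) = x.
Proof. destruct x; simpl; auto; f_equal; ring. Qed.

Lemma is_sup_Rbar_exists (S : Rbar -> Prop) : exists m, is_sup_Rbar S m.
Proof.
  destruct (classic (S PInf)) as [HSinf | HSinf].
  { exists PInf; split; [intros [] _; simpl; auto |].
    intros u Hu; specialize (Hu _ HSinf); destruct u; simpl in *; auto. }
  destruct (classic (exists r, S (Fin r))) as [[r0 Hr0] | Hnofin].
  - destruct (classic (exists M, forall r, S (Fin r) -> r <= M))
      as [[M HM] | Hunbounded].
    + destruct (completeness (fun r => S (Fin r))) as [l [Hub Hlub]].
      { exists M; intros r Hr; apply HM; auto. }
      { exists r0; auto. }
      exists (Fin l); split.
      * intros [r | |] Hx; simpl; auto; try contradiction; apply Hub; auto.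
      * intros [u | |] Hu; simpl; auto.
        -- apply Hlub; intros r Hr; apply (Hu (Fin r) Hr).
        -- apply (Hu _ Hr0).
    + exists PInf; split; [intros [] _; simpl; auto |].
      intros [u | |] Hu; simpl; auto.
      * apply Hunbounded; exists u; intros r Hr; apply (Hu _ Hr).
      * apply (Hu _ Hr0).
  - exists MInf; split.
    + intros [r | |] Hx; simpl; auto; apply Hnofin; eauto.
    + intros [] _; simpl; auto.
Qed.

Lemma is_inf_Rbar_exists (S : Rbar -> Prop) : exists m, is_inf_Rbar S m.
Proof.
  destruct (is_sup_Rbar_exists (fun x => S (Rbar_opp x))) as [m [Hub Hlub]].
  exists (Rbar_opp m); split.
  - intros x Hx. rewrite <- (Rbar_opp_involutive x).
    apply Rbar_opp_le, Hub. rewrite Rbar_opp_involutive; auto.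
  - intros u Hu. rewrite <- (Rbar_opp_involutive u). apply Rbar_opp_le, Hlub.
    intros x Hx. rewrite <- (Rbar_opp_involutive x). apply Rbar_opp_le, Hu; auto.
Qed.

Lemma Rbar_sup_spec S : is_sup_Rbar S (Rbar_sup S).
Proof. unfold Rbar_sup; apply epsilon_spec, is_sup_Rbar_exists. Qed.

Lemma Rbar_inf_spec S : is_inf_Rbar S (Rbar_inf S).
Proof. unfold Rbar_inf; apply epsilon_spec, is_inf_Rbar_exists. Qed.

Lemma Rbar_sup_le_dominated (S1 S2 : Rbar -> Prop) :
  (forall x, S2 x -> exists y, S1 y /\ Rbar_le x y) ->
  Rbar_le (Rbar_sup S2) (Rbar_sup S1).
Proof.
  intros Hdom. destruct (Rbar_sup_spec S2) as [_ Hlub2].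
  destruct (Rbar_sup_spec S1) as [Hub1 _].
  apply Hlub2. intros x Hx. destruct (Hdom x Hx) as [y [Hy Hxy]].
  eapply Rbar_le_trans; eauto.
Qed.

Lemma Rbar_inf_le_subset (S1 S2 : Rbar -> Prop) :
  (forall x, S1 x -> S2 x) -> Rbar_le (Rbar_inf S2) (Rbar_inf S1).
Proof.
  intros Hsub. destruct (Rbar_inf_spec S2) as [Hlb2 _].
  destruct (Rbar_inf_spec S1) as [_ Hglb1].
  apply Hglb1. intros x Hx; apply Hlb2, Hsub; auto.
Qed.

Lemma vopp_unique (Y : Type) (T : TLS Y) x y :
  vadd T x y = vzero T -> y = vopp T x.
Proof.
  intros Hxy.
  rewrite <- (vadd_0 T y), <- (vadd_opp T x), vadd_assoc, (vadd_comm T y x),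
    Hxy, vadd_comm, vadd_0.
  reflexivity.
Qed.

Lemma vopp_sub (Y : Type) (T : TLS Y) b c :
  vopp T (vadd T b (vopp T c)) = vadd T (vopp T b) c.
Proof.
  symmetry; apply vopp_unique.
  rewrite <- vadd_assoc, (vadd_comm T (vopp T b) c), (vadd_assoc T (vopp T c)),
    (vadd_comm T (vopp T c) c), vadd_opp, (vadd_comm T (vzero T)), vadd_0.
  apply vadd_opp.
Qed.

Lemma convex_cone_add (Y : Type) (T : TLS Y) (C : Y -> Prop) :
  is_cone T C -> is_convex T C ->
  forall c1 c2, C c1 -> C c2 -> C (vadd T c1 c2).
Proof.
  intros Hcone Hconv c1 c2 H1 H2.
  assert (Hmid := Hconv (/2) c1 c2 ltac:(lra) H1 H2).
  apply (Hcone 2) in Hmid; [| lra].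
  rewrite vscal_distr_v, !vscal_assoc in Hmid.
  replace (2 * / 2) with 1 in Hmid by field.
  replace (2 * (1 - / 2)) with 1 in Hmid by field.
  rewrite !vscal_1 in Hmid; exact Hmid.
Qed.

Section Monotonicity.
Variables (Y : Type) (T : TLS Y) (C : Y -> Prop) (e : Y).
Hypothesis C_add : forall c1 c2, C c1 -> C c2 -> C (vadd T c1 c2).

Lemma msum_add_cone (D : Y -> Prop) y c :
  C c -> msum T D C y -> msum T D C (vadd T y c).
Proof.
  intros Hc [d [c' [Hd [Hc' ->]]]].
  exists d, (vadd T c' c); repeat split; auto.
  symmetry; apply vadd_assoc.
Qed.

Lemma phi_add_cone (A : Y -> Prop) y c :
  C c -> Rbar_le (phi T C e A (vadd T y c)) (phi T C e A y).
Proof.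
  intros Hc. apply Rbar_inf_le_subset.
  intros z [t [-> Hy]]. exists t; split; auto. apply msum_add_cone; auto.
Qed.

Lemma phi_le_of_incl_msum (A A' : Y -> Prop) y :
  incl A (msum T A' C) -> Rbar_le (phi T C e A' y) (phi T C e A y).
Proof.
  intros HAA'. apply Rbar_inf_le_subset.
  intros z [t [-> [p [c [[s [a [Hs [Ha ->]]]] [Hc ->]]]]]].
  exists t; split; auto.
  destruct (HAA' a Ha) as [a' [c' [Ha' [Hc' ->]]]].
  exists (vadd T s a'), (vadd T c' c); repeat split; auto.
  - exists s, a'; auto.
  - rewrite !vadd_assoc; reflexivity.
Qed.

Lemma Gl_le_of_incl_msum_r (D A B : Y -> Prop) :
  incl B (msum T A C) -> Rbar_le (Gl T C e D B) (Gl T C e D A).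
Proof.
  intros HBA. apply Rbar_sup_le_dominated.
  intros x [b [Hb ->]]. destruct (HBA b Hb) as [a [c [Ha [Hc ->]]]].
  exists (phi T C e D a); split; [eauto | apply phi_add_cone; auto].
Qed.

Lemma Gl_le_of_incl_msum_l (A A' B : Y -> Prop) :
  incl A (msum T A' C) -> Rbar_le (Gl T C e A' B) (Gl T C e A B).
Proof.
  intros HAA'. apply Rbar_sup_le_dominated.
  intros x [b [Hb ->]].
  exists (phi T C e A b); split; [eauto | apply phi_le_of_incl_msum; auto].
Qed.

Lemma sopp_incl_msum (A B : Y -> Prop) :
  incl A (mdiff T B C) -> incl (sopp T A) (msum T (sopp T B) C).
Proof.
  intros HAB y [a [Ha ->]]. destruct (HAB a Ha) as [b [c [Hb [Hc ->]]]].
  rewrite vopp_sub. exists (vopp T b), c; repeat split; auto.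
  exists b; auto.
Qed.

Lemma v_e_monotone (A B : Y -> Prop) :
  s_le T C A B -> le2 (v_e T C e A) (v_e T C e B).
Proof.
  intros [HBA HAB]. split; apply Rbar_opp_le.
  - apply Gl_le_of_incl_msum_r; auto.
  - apply Gl_le_of_incl_msum_l, sopp_incl_msum; auto.
Qed.

End Monotonicity.

Theorem corollary1 (Y : Type) (T : TLS Y) (C : Y -> Prop)
  (HC : good_cone T C)
  (X : Type) (HX : inhabited X) (F : X -> Y -> Prop)
  (HF0 : forall x, P0mpC T C (F x))
  (HFcl : forall x, mpC_closed T C (F x))
  (HFbd : forall x, mpC_bounded T C (F x))
  (e : Y) (He : tinterior T C (vopp T e))
  (Htot : forall x y, s_le T C (F x) (F y) \/ s_le T C (F y) (F x))
  (x0 : X) :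
  (s_maximal T C F x0 -> strongly_max (fun x => v_e T C e (F x)) x0) /\
  (s_minimal T C F x0 -> strongly_min (fun x => v_e T C e (F x)) x0).
Proof.
  destruct HC as [Hcone [Hconv _]].
  pose proof (convex_cone_add Hcone Hconv) as C_add.
  split; intros Hopt x; apply (v_e_monotone e C_add);
    destruct (Htot x0 x); auto.
Qed.
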